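(* Let $A,Q,C_1,\dots,C_M,R_1,\dots,R_M$ be real scalars with $Q\ge0$ and $R_m>0$, and for $P\ge0$ define $f(P)=A^2P+Q$ and $g_m(P)=A^2P+Q-\frac{A^2C_m^2P^2}{C_m^2P+R_m}$, $m=1,\dots,M$. Let $\mathcal{F}$ be any function formed by composition (in any order) of any of the functions $f,g_1,\dots,g_M,\mathrm{id}$. Then: (i) $\mathcal{F}$ is either of the affine form $\mathcal{F}(P)=aP+b$ for some $a,b\ge0$, or of the linear fractional form $\mathcal{F}(P)=\frac{aP+b}{cP+d}$ for some $a,b,c,d\ge0$ with $ad-bc\ge0$; (ii) for each $m=1,\dots,M$, $P\mapsto\mathcal{F}(f(P))-\mathcal{F}(g_m(P))$ is an increasing function of $P\ge0$.
   Context: $\mathrm{id}$ denotes the identity function. Increasing means non-decreasing. *)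

From mathcomp Require Import all_boot all_order all_algebra.
Set Implicit Arguments. Unset Strict Implicit. Unset Printing Implicit Defensive.
Import Order.TTheory GRing.Theory Num.Theory.
Local Open Scope ring_scope.

Definition fmap {R : realFieldType} (A Q P : R) : R := A ^+ 2 * P + Q.

Definition gmap {R : realFieldType} (A Q C Rm P : R) : R :=
  A ^+ 2 * P + Q - A ^+ 2 * C ^+ 2 * P ^+ 2 / (C ^+ 2 * P + Rm).

Inductive gen (M : nat) : Type :=
| GenF : gen M
| GenG : 'I_M -> gen M
| GenId : gen M.

Definition gen_eval {R : realFieldType} {M : nat} (A Q : R) (C Rm : 'I_M -> R)
  (h : gen M) (P : R) : R :=
  match h with
  | GenF => fmap A Q P
  | GenG m => gmap A Q (C m) (Rm m) P
  | GenId => P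
  end.

(* comp_eval [:: h1; ...; hk] P = h1 (h2 ( ... (hk P))) *)
Definition comp_eval {R : realFieldType} {M : nat} (A Q : R) (C Rm : 'I_M -> R)
  (s : seq (gen M)) (P : R) : R :=
  foldr (fun h acc => gen_eval A Q C Rm h acc) P s.

(* Every generator acts on [P >= 0] as a Moebius map (a P + b) / (c P + d) with
   nonnegative coefficients, [d > 0] and nonnegative determinant [a d - b c];
   composition multiplies the coefficient matrices, which preserves all of these
   sign conditions, so every composition [F] is such a map.  For (ii), subtracting
   [F] at [f P] and at [g_m P] and clearing denominators gives
   [K P^2 / ((u P + v) (w P + z))] with [K, u, w >= 0] and [v, z > 0]; this is
   [K / ((u + v/P) (w + z/P))], visibly nondecreasing in [P]. *)
From mathcomp Require Import all_boot all_order all_algebra.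
From mathcomp Require Import ring lra.
Import Order.TTheory GRing.Theory Num.Theory.
Set Implicit Arguments. Unset Strict Implicit.
Local Open Scope ring_scope.

Section Mobius.
Variable R : realFieldType.

Definition mobius (a b c d x : R) := (a * x + b) / (c * x + d).

Definition pos_mobius (a b c d : R) :=
  [/\ 0 <= a, 0 <= b, 0 <= c, 0 < d & 0 <= a * d - b * c].

Lemma pos_mobius_id : pos_mobius 1 0 0 1.
Proof. by split; rewrite ?mulr0 ?subr0 ?mulr1 ?ltr01. Qed.

Lemma mobius_id x : mobius 1 0 0 1 x = x.
Proof. by rewrite /mobius mul1r addr0 mul0r add0r divr1. Qed.

Lemma mobius_den_gt0 a b c d x : pos_mobius a b c d -> 0 <= x -> 0 < c * x + d.
Proof. by case=> *; nra. Qed.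

Lemma mobius_ge0 a b c d x : pos_mobius a b c d -> 0 <= x -> 0 <= mobius a b c d x.
Proof.
move=> abcd x_ge0; have den_gt0 := mobius_den_gt0 abcd x_ge0.
case: abcd => a_ge0 b_ge0 *.
by rewrite /mobius divr_ge0 ?(ltW den_gt0) // addr_ge0 ?mulr_ge0.
Qed.

Lemma pos_mobius_comp al be ga de a b c d :
  pos_mobius al be ga de -> pos_mobius a b c d ->
  pos_mobius (al * a + be * c) (al * b + be * d) (ga * a + de * c) (ga * b + de * d).
Proof. by case=> ? ? ? ? ? [? ? ? ? ?]; split; nra. Qed.

Lemma mobius_comp al be ga de a b c d x :
  pos_mobius al be ga de -> pos_mobius a b c d -> 0 <= x ->
  mobius al be ga de (mobius a b c d x) =
  mobius (al * a + be * c) (al * b + be * d) (ga * a + de * c) (ga * b + de * d) x.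
Proof.
move=> outer inner x_ge0.
have den_inner := mobius_den_gt0 inner x_ge0.
have den_outer := mobius_den_gt0 outer (mobius_ge0 inner x_ge0).
have den_comp := mobius_den_gt0 (pos_mobius_comp outer inner) x_ge0.
move: den_outer den_comp; rewrite /mobius => den_outer den_comp.
by field; rewrite !gt_eqF.
Qed.

Lemma homo_sqr_div_linear_prod (K u v w z : R) :
  0 <= K -> 0 <= u -> 0 < v -> 0 <= w -> 0 < z ->
  {in Num.nneg &, {homo (fun P => K * P ^+ 2 / ((u * P + v) * (w * P + z))) :
    P1 P2 / P1 <= P2}}.
Proof.
move=> K_ge0 u_ge0 v_gt0 w_ge0 z_gt0 P1 P2; rewrite !nnegrE => P1_ge0 P2_ge0 le12.
have den1 : 0 < (u * P1 + v) * (w * P1 + z) by apply: mulr_gt0; nra.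
have den2 : 0 < (u * P2 + v) * (w * P2 + z) by apply: mulr_gt0; nra.
rewrite ler_pdivrMr // mulrAC ler_pdivlMr // -!mulrA ler_wpM2l // -subr_ge0.
have -> : P2 * (P2 * ((u * P1 + v) * (w * P1 + z))) - P1 * (P1 * ((u * P2 + v) * (w * P2 + z)))
  = (u * z + v * w) * (P1 * P2 * (P2 - P1)) + v * z * (P2 ^+ 2 - P1 ^+ 2) by ring.
have d12 : 0 <= P2 - P1 by rewrite subr_ge0.
by apply: addr_ge0; apply: mulr_ge0; rewrite ?mulr_ge0 //; nra.
Qed.

End Mobius.

Section Generators.
Variables (R : realFieldType) (A Q C Rm : R).
Hypotheses (Q_ge0 : 0 <= Q) (Rm_gt0 : 0 < Rm).

Lemma pos_mobius_fmap : pos_mobius (A ^+ 2) Q 0 1.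
Proof. by split; rewrite ?mulr0 ?subr0 ?mulr1 ?ltr01 ?lexx ?sqr_ge0. Qed.

Lemma fmap_mobius P : fmap A Q P = mobius (A ^+ 2) Q 0 1 P.
Proof. by rewrite /fmap /mobius mul0r add0r divr1. Qed.

Lemma pos_mobius_gmap : pos_mobius (A ^+ 2 * Rm + Q * C ^+ 2) (Q * Rm) (C ^+ 2) Rm.
Proof.
have A2_ge0 := sqr_ge0 A; have C2_ge0 := sqr_ge0 C.
rewrite /pos_mobius.
have -> : (A ^+ 2 * Rm + Q * C ^+ 2) * Rm - Q * Rm * C ^+ 2 = A ^+ 2 * Rm ^+ 2 by ring.
have Rm_ge0 := ltW Rm_gt0.
split=> //; last exact: mulr_ge0 (sqr_ge0 _).
- exact: addr_ge0 (mulr_ge0 _ _) (mulr_ge0 _ _).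
- exact: mulr_ge0.
Qed.

Lemma gmap_mobius P : 0 <= P ->
  gmap A Q C Rm P = mobius (A ^+ 2 * Rm + Q * C ^+ 2) (Q * Rm) (C ^+ 2) Rm P.
Proof.
move=> P_ge0; have := mobius_den_gt0 pos_mobius_gmap P_ge0.
by rewrite /gmap /mobius => den_gt0; field; rewrite gt_eqF.
Qed.

Lemma fmap_ge0 P : 0 <= P -> 0 <= fmap A Q P.
Proof. by rewrite fmap_mobius; apply: mobius_ge0 pos_mobius_fmap. Qed.

Lemma gmap_ge0 P : 0 <= P -> 0 <= gmap A Q C Rm P.
Proof. by move=> P_ge0; rewrite gmap_mobius //; apply: mobius_ge0 pos_mobius_gmap _. Qed.

(* Since [f P - g P = A^2 C^2 P^2 / (C^2 P + Rm)], the difference is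
   [(a d - b c) (f P - g P) / ((c f P + d) (c g P + d))], and
   [(C^2 P + Rm) (c g P + d)] is affine in [P]. *)
Lemma mobius_fmap_sub_gmap a b c d P : pos_mobius a b c d -> 0 <= P ->
  mobius a b c d (fmap A Q P) - mobius a b c d (gmap A Q C Rm P) =
  ((a * d - b * c) * A ^+ 2 * C ^+ 2) * P ^+ 2 /
   ((c * A ^+ 2 * P + (c * Q + d)) *
    ((c * (A ^+ 2 * Rm + Q * C ^+ 2) + d * C ^+ 2) * P + Rm * (c * Q + d))).
Proof.
move=> abcd P_ge0.
have den_f := mobius_den_gt0 abcd (fmap_ge0 P_ge0).
have den_g := mobius_den_gt0 abcd (gmap_ge0 P_ge0).
have den_gmap := mobius_den_gt0 pos_mobius_gmap P_ge0.
have [_ _ c_ge0 d_gt0 _] := abcd.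
have [gm_a _ gm_c _ _] := pos_mobius_gmap.
have cQd_gt0 : 0 < c * Q + d by apply: ltr_wpDl => //; exact: mulr_ge0.
have lin_f : 0 < c * A ^+ 2 * P + (c * Q + d).
  by apply: ltr_wpDl => //; apply: mulr_ge0 (mulr_ge0 _ (sqr_ge0 _)) _.
have lin_g : 0 < (c * (A ^+ 2 * Rm + Q * C ^+ 2) + d * C ^+ 2) * P + Rm * (c * Q + d).
  apply: ltr_wpDl; last exact: mulr_gt0.
  exact: mulr_ge0 (addr_ge0 (mulr_ge0 c_ge0 gm_a) (mulr_ge0 (ltW d_gt0) gm_c)) P_ge0.
rewrite gmap_mobius //; move: den_f den_g; rewrite /mobius /fmap => den_f den_g.
by field; rewrite !gt_eqF.
Qed.

End Generators.

Lemma comp_eval_mobius (R : realFieldType) (M : nat) (A Q : R) (C Rm : 'I_M -> R)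
  (Q_ge0 : 0 <= Q) (Rm_gt0 : forall m, 0 < Rm m) (s : seq (gen M)) :
  exists a b c d, pos_mobius a b c d /\
    forall x, 0 <= x -> comp_eval A Q C Rm s x = mobius a b c d x.
Proof.
have gen_eval_mobius (h : gen M) : exists a b c d, pos_mobius a b c d /\
    forall x, 0 <= x -> gen_eval A Q C Rm h x = mobius a b c d x.
  case: h => [|m|].
  - by exists (A ^+ 2), Q, 0, 1; split=> [|x _]; [exact: pos_mobius_fmap | exact: fmap_mobius].
  - exists (A ^+ 2 * Rm m + Q * C m ^+ 2), (Q * Rm m), (C m ^+ 2), (Rm m).
    by split=> [|x x_ge0]; [exact: pos_mobius_gmap | exact: gmap_mobius].
  - by exists 1, 0, 0, 1; split=> [|x _]; [exact: pos_mobius_id | rewrite mobius_id].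
elim: s => [|h s [a [b [c [d [abcd Es]]]]]].
  by exists 1, 0, 0, 1; split=> [|x _]; [exact: pos_mobius_id | rewrite mobius_id].
have [al [be [ga [de [h_mob Eh]]]]] := gen_eval_mobius h.
exists (al * a + be * c), (al * b + be * d), (ga * a + de * c), (ga * b + de * d).
split=> [|x x_ge0]; first exact: pos_mobius_comp.
rewrite /= -/(comp_eval A Q C Rm s x) Es // Eh ?mobius_ge0 //.
exact: mobius_comp.
Qed.

Theorem lemma5 (R : realFieldType) (M : nat) (A Q : R) (C Rm : 'I_M -> R)
  (hQ : 0 <= Q) (hR : forall m, 0 < Rm m) (s : seq (gen M)) :
  let F := comp_eval A Q C Rm s in
  ((exists a b : R, 0 <= a /\ 0 <= b /\ forall P, 0 <= P -> F P = a * P + b)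
   \/
   (exists a b c d : R, [/\ 0 <= a, 0 <= b, 0 <= c, 0 <= d & 0 <= a * d - b * c] /\
      forall P, 0 <= P -> c * P + d != 0 /\ F P = (a * P + b) / (c * P + d)))
  /\
  (forall m : 'I_M, forall P1 P2 : R, 0 <= P1 -> P1 <= P2 ->
     F (fmap A Q P1) - F (gmap A Q (C m) (Rm m) P1)
       <= F (fmap A Q P2) - F (gmap A Q (C m) (Rm m) P2)).
Proof.
move=> F; have [a [b [c [d [abcd EF]]]]] := comp_eval_mobius A C hQ hR s.
split.
  right; exists a, b, c, d; split; first by case: abcd => *; split=> //; exact: ltW.
  by move=> P P_ge0; rewrite gt_eqF ?(mobius_den_gt0 abcd) //; split=> //; exact: EF.
move=> m P1 P2 P1_ge0 le12; have P2_ge0 := le_trans P1_ge0 le12.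
rewrite /F !EF ?fmap_ge0 ?gmap_ge0 // !mobius_fmap_sub_gmap //.
have [_ _ c_ge0 d_gt0 det_ge0] := abcd.
have [gm_a _ gm_c Rm_gt0 _] := pos_mobius_gmap A (C m) hQ (hR m).
have cQd_gt0 : 0 < c * Q + d by apply: ltr_wpDl => //; exact: mulr_ge0.
apply: homo_sqr_div_linear_prod; rewrite ?nnegrE //.
- exact: mulr_ge0 (mulr_ge0 det_ge0 (sqr_ge0 _)) (sqr_ge0 _).
- exact: mulr_ge0 c_ge0 (sqr_ge0 _).
- exact: addr_ge0 (mulr_ge0 c_ge0 gm_a) (mulr_ge0 (ltW d_gt0) gm_c).
- exact: mulr_gt0.
Qed.
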